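(* For every $d \geq 1$ and $\varepsilon \leq \frac{1}{2}$, every algorithm for robust mean estimation of $d$-dimensional distributions with covariance $\Sigma \preceq \sigma^2 I$ in the population limit has, on some input, error \[ \mathbb{E}[\|\widehat{\mu} - \mu\|] \geq JUNG_d \cdot (1 + O(\varepsilon)) \cdot \sqrt{2\sigma^2\varepsilon}, \] where the $O(\cdot)$ hides an absolute constant (i.e. the bound is at least $JUNG_d(1-c\varepsilon)\sqrt{2\sigma^2\varepsilon}$ for an absolute constant $c$).
   Context: $JUNG_d := \sqrt{\frac{2d}{d+1}}$. Robust mean estimation in the population limit: there is an unknown true distribution $D$ on $\mathbb{R}^d$ with mean $\mu$ and covariance $\Sigma \preceq \sigma^2 I$; an adversary replaces it by any distribution $D'$ with total variation distance $TV(D, D') \leq \varepsilon$. The (possibly randomized) algorithm is given $\varepsilon$, $\sigma^2$ and the distribution $D'$ itself (not samples), and outputs $\widehat{\mu} \in \mathbb{R}^d$; its error is $\mathbb{E}\|\widehat{\mu} - \mu\|$, the expectation over the algorithm's randomness. ''On some input'' means there exist $\sigma$, such a $D$ and such a $D'$ for which the stated lower bound holds. *)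

(* R^d is modelled as [d.-tuple R], which
   mathcomp-analysis equips with the product (= Borel) sigma-algebra generated
   by the coordinate projections. *)
From HB Require Import structures.
From mathcomp Require Import all_boot all_order all_algebra.
From mathcomp Require Import all_classical all_reals all_analysis.
Set Implicit Arguments. Unset Strict Implicit. Unset Printing Implicit Defensive.
Import Order.TTheory GRing.Theory Num.Theory.
Local Open Scope classical_set_scope.
Local Open Scope ring_scope.

Section RobustMean.
Variables (R : realType) (d : nat).

Definition vec := (d.-tuple R).

Definition coord (i : 'I_d) (x : vec) : R := tnth x i.

Definition vsub (x y : vec) : vec := [tuple tnth x i - tnth y i | i < d].

Definition dotp (x y : vec) : R := \sum_(i < d) tnth x i * tnth y i.

Definition enorm (x : vec) : R := Num.sqrt (dotp x x).

Definition has_mean (D : probability vec R) (mu : vec) : Prop :=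
  forall i : 'I_d, D.-integrable setT (fun x => (coord i x)%:E) /\
    (\int[D]_x (coord i x)%:E = (tnth mu i)%:E)%E.

(* Covariance Sigma <= sigma2 * I (Loewner order): for every direction v,
   E[(v . (x - mu))^2] <= sigma2 * |v|^2. *)
Definition cov_le (D : probability vec R) (mu : vec) (sigma2 : R) : Prop :=
  forall v : vec,
    (\int[D]_x ((dotp v (vsub x mu)) ^+ 2)%:E <= (sigma2 * dotp v v)%:E)%E.

Definition tv_le (P Q : probability vec R) (eps : R) : Prop :=
  forall A : set vec, measurable A -> `| fine (P A) - fine (Q A) | <= eps.

(* A (possibly randomized) algorithm: given eps, sigma^2 and the corrupted
   distribution D', it outputs the distribution of its estimate muhat. *)
Definition algorithm := R -> R -> probability vec R -> probability vec R.

Definition alg_error (A : algorithm) (eps sigma2 : R) (D' : probability vec R)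
  (mu : vec) : \bar R :=
  (\int[A eps sigma2 D']_x (enorm (vsub x mu))%:E)%E.

End RobustMean.

Definition JUNG {R : realType} (d : nat) : R :=
  Num.sqrt (2 * d%:R / (d%:R + 1)).

From HB Require Import structures.
From mathcomp Require Import all_boot all_order all_algebra.
From mathcomp Require Import all_classical all_reals all_analysis.
From mathcomp Require Import ring lra measurable_realfun.
Import Order.TTheory GRing.Theory Num.Theory.
Set Implicit Arguments. Unset Strict Implicit. Unset Printing Implicit Defensive.
Local Open Scope classical_set_scope.
Local Open Scope ring_scope.

(* Let v_0, ..., v_m be the vertices of a regular simplex of R^m (inside R^d)
   centred at 0, normalised so that they form a Parseval frame, where m <= d
   is maximal with (m + 1) eps <= 1.  The corrupted distribution D' puts mass
   eps on each -v_k and the rest at 0.  Moving the atom -v_j to +v_j costs eps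
   in total variation and gives a distribution D_j with mean mu_j = 2 eps v_j
   and covariance at most eps I.  The means mu_j sum to 0 and have a common
   norm r = 2 eps sqrt (m / (m + 1)), so by Cauchy-Schwarz
   sum_j |x - mu_j| >= (m + 1) r for every x: whatever the algorithm outputs
   on D', its expected error is at least r for one of the D_j.  With
   sigma^2 = eps, the choice of m makes r >= JUNG_d (1 - 2 eps) sqrt (2 sigma^2 eps). *)

Lemma sum_mul_delta (R : pzSemiRingType) n j (F : nat -> R) : (j < n)%N ->
  \sum_(i < n) F i * ((i : nat) == j)%:R = F j.
Proof.
move=> j_lt; rewrite (bigD1 (Ordinal j_lt)) //= eqxx mulr1 big1 ?addr0 //.
by move=> i /negPf; rewrite -val_eqE /= => ->; rewrite mulr0.
Qed.

Lemma sum_ord_trunc (V : nmodType) n m (F : nat -> V) : (m <= n)%N ->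
  \sum_(i < n) (if ((i : nat) < m)%N then F i else 0) = \sum_(i < m) F i.
Proof. by move=> m_le; rewrite (big_ord_widen n F m_le) [RHS]big_mkcond. Qed.

Lemma weighted_variance_le (R : realDomainType) n (w a : 'I_n -> R) :
  \sum_k w k = 1 ->
  \sum_k w k * (a k - \sum_l w l * a l) ^+ 2 <= \sum_k w k * a k ^+ 2.
Proof.
move=> w1; set M := \sum_l w l * a l.
rewrite (eq_bigr (fun k => w k * a k ^+ 2 - 2 * M * (w k * a k) + M ^+ 2 * w k));
  last first.
  by move=> k _; ring.
by rewrite !big_split /= sumrN -!mulr_sumr -/M w1; nra.
Qed.

Section RegularSimplex.
Variables (R : rcfType) (m : nat).
Hypothesis m_gt0 : (0 < m)%N.

Definition simplex_q : R := Num.sqrt (m.+1%:R^-1).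
Definition simplex_t : R := (1 - simplex_q) / m%:R.

(* Coordinate i of vertex j.  The values of q and t are forced by
   m t + q = 1 and m t^2 - 2 t + q^2 = 0, which make the vertices sum to 0
   and form a Parseval frame. *)
Definition simplex_coord (j i : nat) : R :=
  if j == m then - simplex_q else (i == j)%:R - simplex_t.

Lemma simplex_q_sqr : simplex_q ^+ 2 = m.+1%:R^-1.
Proof. by rewrite sqr_sqrtr // invr_ge0 ler0n. Qed.

Lemma mulr_simplex_q_sqr : (m%:R + 1) * simplex_q ^+ 2 = 1.
Proof. by rewrite simplex_q_sqr natr1 divff // pnatr_eq0. Qed.

Let m_neq0 : m%:R != 0 :> R.
Proof. by rewrite pnatr_eq0 -lt0n. Qed.

Lemma simplex_t_lin : m%:R * simplex_t + simplex_q = 1.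
Proof. by rewrite /simplex_t mulrCA divff // mulr1 subrK. Qed.

Lemma simplex_t_quad : m%:R * simplex_t ^+ 2 - 2 * simplex_t + simplex_q ^+ 2 = 0.
Proof.
transitivity (((m%:R + 1) * simplex_q ^+ 2 - 1) / m%:R).
  by rewrite /simplex_t; field.
by rewrite mulr_simplex_q_sqr subrr mul0r.
Qed.

Lemma sum_simplex_coord i : (i < m)%N -> \sum_(j < m.+1) simplex_coord j i = 0.
Proof.
move=> i_lt; rewrite big_ord_recr /= /simplex_coord eqxx.
rewrite (eq_bigr (fun j : 'I_m => 1 * ((j : nat) == i)%:R - simplex_t)); last first.
  by move=> j _; rewrite ifN ?neq_ltn ?ltn_ord // mul1r eq_sym.
rewrite sumrB (sum_mul_delta (fun _ => 1)) // sumr_const card_ord -mulr_natl.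
by have := simplex_t_lin; lra.
Qed.

Lemma sum_sqr_simplex_coord j : (j <= m)%N ->
  \sum_(i < m) simplex_coord j i ^+ 2 = 1 - simplex_q ^+ 2.
Proof.
move=> j_le; rewrite /simplex_coord; have [_|j_neq] := eqVneq j m.
  rewrite sqrrN sumr_const card_ord -mulr_natl.
  by have := mulr_simplex_q_sqr; lra.
have j_lt : (j < m)%N by rewrite ltn_neqAle j_neq.
rewrite (eq_bigr (fun i : 'I_m => (1 - 2 * simplex_t) * ((i : nat) == j)%:R
  + simplex_t ^+ 2)); last first.
  by move=> i _; case: (_ == _); rewrite /=; ring.
rewrite big_split /= (sum_mul_delta (fun _ => 1 - 2 * simplex_t)) //.
by rewrite sumr_const card_ord -mulr_natl; have := simplex_t_quad; lra.
Qed.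

Lemma simplex_parseval (x : nat -> R) :
  \sum_(j < m.+1) (\sum_(i < m) x i * simplex_coord j i) ^+ 2 = \sum_(i < m) x i ^+ 2.
Proof.
set S := \sum_(i < m) x i.
rewrite big_ord_recr /= /simplex_coord eqxx.
under eq_bigr => j _.
  have /negPf -> : (j : nat) != m by rewrite neq_ltn ltn_ord.
  under eq_bigr do rewrite mulrBr.
  rewrite sumrB sum_mul_delta // -mulr_suml mulrC -/S.
  over.
under [X in _ + X ^+ 2]eq_bigr do rewrite mulrN.
rewrite sumrN -mulr_suml -/S.
rewrite (eq_bigr (fun j : 'I_m => x j ^+ 2 - 2 * simplex_t * S * x j
  + (simplex_t * S) ^+ 2)); last first.
  by move=> j _; ring.
rewrite !big_split /= sumrN -mulr_sumr -/S sumr_const card_ord -mulr_natl.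
transitivity (\sum_(i < m) x i ^+ 2 + S ^+ 2 *
  (m%:R * simplex_t ^+ 2 - 2 * simplex_t + simplex_q ^+ 2)); first ring.
by rewrite simplex_t_quad mulr0 addr0.
Qed.

End RegularSimplex.

Section Vectors.
Variables (R : realType) (d : nat).
Implicit Types (x y u v : vec R d).

Definition vscale (c : R) v : vec R d := [tuple c * tnth v i | i < d].

Lemma tnth_vsub x y i : tnth (vsub x y) i = tnth x i - tnth y i.
Proof. exact: tnth_mktuple. Qed.

Lemma tnth_vscale c v i : tnth (vscale c v) i = c * tnth v i.
Proof. exact: tnth_mktuple. Qed.

Lemma dotpC x y : dotp x y = dotp y x.
Proof. by apply: eq_bigr => i _; rewrite mulrC. Qed.

Lemma dotp_ge0 x : 0 <= dotp x x.
Proof. by apply: sumr_ge0 => i _; rewrite -expr2 sqr_ge0. Qed.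

Lemma dotpBr u x y : dotp u (vsub x y) = dotp u x - dotp u y.
Proof. by rewrite /dotp -sumrB; apply: eq_bigr => i _; rewrite tnth_vsub mulrBr. Qed.

Lemma dotpZr u c v : dotp u (vscale c v) = c * dotp u v.
Proof. by rewrite /dotp mulr_sumr; apply: eq_bigr => i _; rewrite tnth_vscale mulrCA. Qed.

Lemma dotpZl c u v : dotp (vscale c u) v = c * dotp u v.
Proof. by rewrite dotpC dotpZr dotpC. Qed.

Lemma sum_dotpr n (c : 'I_n -> R) (p : 'I_n -> vec R d) u :
  \sum_(k < n) c k * dotp u (p k)
  = \sum_(i < d) tnth u i * \sum_(k < n) c k * tnth (p k) i.
Proof.
under eq_bigr do rewrite /dotp mulr_sumr.
rewrite exchange_big; apply: eq_bigr => i _; rewrite mulr_sumr.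
by apply: eq_bigr => k _; rewrite mulrCA.
Qed.

Lemma sqr_dotp_le x y : dotp x y ^+ 2 <= dotp x x * dotp y y.
Proof.
pose X i := tnth x i; pose Y i := tnth y i.
pose f i j := X i * X i * (Y j * Y j) - X i * Y i * (X j * Y j).
have sum_f : \sum_(i < d) \sum_(j < d) f i j = dotp x x * dotp y y - dotp x y ^+ 2.
  rewrite /f /dotp expr2 !big_distrlr -sumrB.
  by apply: eq_bigr => i _; rewrite -sumrB.
have lagrange : \sum_(i < d) \sum_(j < d) (X i * Y j - X j * Y i) ^+ 2
    = 2 * (dotp x x * dotp y y - dotp x y ^+ 2).
  rewrite (eq_bigr (fun i => \sum_(j < d) (f i j + f j i))); last first.
    by move=> i _; apply: eq_bigr => j _; rewrite /f; ring.
  under eq_bigr do rewrite big_split /=.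
  by rewrite big_split /= [X in _ + X]exchange_big /= sum_f; ring.
rewrite -subr_ge0 -(pmulr_rge0 _ (ltr0n _ 2)) -lagrange.
by apply: sumr_ge0 => i _; apply: sumr_ge0 => j _; exact: sqr_ge0.
Qed.

Lemma normr_dotp_le x y : `|dotp x y| <= enorm x * enorm y.
Proof.
by rewrite -sqrtr_sqr -sqrtrM ?dotp_ge0 // ler_wsqrtr // sqr_dotp_le.
Qed.

Lemma measurable_tnth_vsub mu i : measurable_fun setT (fun x => tnth (vsub x mu) i).
Proof.
under eq_fun do rewrite tnth_vsub.
by apply: measurable_funB => //; exact: measurable_tnth.
Qed.

Lemma measurable_dotp_vsub v mu :
  measurable_fun setT (fun x : vec R d => dotp v (vsub x mu)).
Proof.
apply: measurable_sum => i.
by apply: measurable_funM => //; exact: measurable_tnth_vsub.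
Qed.

Lemma measurable_enorm_vsub mu :
  measurable_fun setT (fun x : vec R d => enorm (vsub x mu)).
Proof.
rewrite /enorm; apply: measurableT_comp.
  exact: continuous_measurable_fun (@sqrt_continuous R).
by apply: measurable_sum => i; apply: measurable_funM; exact: measurable_tnth_vsub.
Qed.

End Vectors.

Section SimplexVertices.
Variables (R : realType) (d m : nat).
Hypotheses (m_gt0 : (0 < m)%N) (m_le_d : (m <= d)%N).

Definition simplex_vertex (j : nat) : vec R d :=
  [tuple if ((i : nat) < m)%N then simplex_coord R m j i else 0 | i < d].

Lemma sum_simplex_vertex (i : 'I_d) : \sum_(j < m.+1) tnth (simplex_vertex j) i = 0.
Proof.
have [i_lt|i_ge] := ltnP i m.
  under eq_bigr do rewrite tnth_mktuple i_lt.
  exact: sum_simplex_coord.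
by rewrite big1 // => j _; rewrite tnth_mktuple ltnNge i_ge.
Qed.

Lemma dotp_simplex_vertex j : (j <= m)%N ->
  dotp (simplex_vertex j) (simplex_vertex j) = 1 - m.+1%:R^-1.
Proof.
move=> j_le; rewrite -simplex_q_sqr -(@sum_sqr_simplex_coord R m m_gt0 j j_le).
rewrite -(sum_ord_trunc (fun i => simplex_coord R m j i ^+ 2) m_le_d).
by apply: eq_bigr => i _; rewrite tnth_mktuple; case: ifP; rewrite ?mulr0 ?expr2.
Qed.

Lemma sum_sqr_dotp_simplex_vertex_le (u : vec R d) :
  \sum_(j < m.+1) dotp u (simplex_vertex j) ^+ 2 <= dotp u u.
Proof.
pose x i := nth 0 (val u) i.
have dotp_vertex j : dotp u (simplex_vertex j) = \sum_(i < m) x i * simplex_coord R m j i.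
  rewrite -(sum_ord_trunc (fun i => x i * simplex_coord R m j i) m_le_d).
  apply: eq_bigr => i _; rewrite tnth_mktuple (tnth_nth 0).
  by case: ifP; rewrite ?mulr0.
under eq_bigr do rewrite dotp_vertex.
rewrite simplex_parseval // -(sum_ord_trunc (fun i => x i ^+ 2) m_le_d).
apply: ler_sum => i _; rewrite (tnth_nth 0) -expr2.
by case: ifP => // _; exact: sqr_ge0.
Qed.

End SimplexVertices.

Lemma mnormalize_unit_mass dT (T : measurableType dT) (R : realType)
    (mu : {measure set T -> \bar R}) (P : probability T R) A :
  mu setT = 1%E -> mnormalize mu P A = mu A.
Proof. by move=> mu1; rewrite /mnormalize /= mu1 onee_eq0 /= invr1 mule1. Qed.

Section DiscreteProbability.
Context dT (T : measurableType dT) (R : realType).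
Variables (n : nat) (w : nat -> R) (p : nat -> T).

(* Taking [`|w k|] spares a nonnegativity hypothesis on the weights. *)
Definition discrete_measure :=
  msum (fun k => mscale `|w k|%:nng (@dirac _ T (p k) R)) n.

Local Open Scope ereal_scope.

Lemma discrete_measureE A :
  discrete_measure A = (\sum_(k < n) `|w k| * (p k \in A)%:R)%R%:E.
Proof.
by rewrite /discrete_measure /msum /= sumEFin; congr (_%:E);
  apply: eq_bigr => k _; rewrite indicE.
Qed.

Lemma ge0_integral_discrete_measure (f : T -> \bar R) :
  measurable_fun setT f -> (forall x, 0 <= f x) ->
  \int[discrete_measure]_x f x = \sum_(k < n) `|w k|%:E * f (p k).
Proof.
move=> mf f_ge0; rewrite ge0_integral_measure_sum //.
apply: eq_bigr => k _; rewrite ge0_integral_mscale // integral_dirac //.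
by rewrite diracT mul1e.
Qed.

Lemma integral_discrete_measure (g : T -> R) : measurable_fun setT g ->
  \int[discrete_measure]_x (g x)%:E = (\sum_(k < n) `|w k| * g (p k))%R%:E.
Proof.
move=> mg; have mgE : measurable_fun setT (EFin \o g) by exact/measurable_EFinP.
rewrite integralE !ge0_integral_discrete_measure //; last 2 first.
- exact: measurable_funeneg.
- exact: measurable_funepos.
under eq_bigr do rewrite funeposE -EFin_max -EFinM.
under [X in _ - X]eq_bigr do rewrite funenegE -EFin_max -EFinM.
rewrite !sumEFin -EFinB -sumrB; congr (_%:E); apply: eq_bigr => k _.
rewrite -mulrBr; congr (_ * _)%R.
by rewrite /Order.max; case: ltrP => ?; case: ltrP => ?; lra.
Qed.

Hypothesis w_sum1 : (\sum_(k < n) `|w k| = 1)%R.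

(* The Dirac mass is only the fallback of [mnormalize] for total mass 0 or +oo. *)
Definition discrete_prob : probability T R :=
  mnormalize discrete_measure (@dirac _ T (p 0%N) R).

Lemma discrete_probE A : discrete_prob A = discrete_measure A.
Proof.
have mass1 : discrete_measure setT = 1.
  rewrite discrete_measureE; congr (_%:E); rewrite -[RHS]w_sum1.
  by apply: eq_bigr => k _; rewrite in_setT mulr1.
exact: mnormalize_unit_mass.
Qed.

Lemma integral_discrete_prob (g : T -> R) : measurable_fun setT g ->
  \int[discrete_prob]_x (g x)%:E = (\sum_(k < n) `|w k| * g (p k))%R%:E.
Proof.
move=> mg; rewrite -integral_discrete_measure //.
by apply: eq_measure_integral => A _ _; exact: discrete_probE.
Qed.

Lemma integrable_discrete_prob (g : T -> R) : measurable_fun setT g ->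
  discrete_prob.-integrable setT (fun x => (g x)%:E).
Proof.
move=> mg; apply/integrableP; split; first exact/measurable_EFinP.
rewrite integral_discrete_prob ?ltry //.
by apply: measurableT_comp.
Qed.

End DiscreteProbability.

Section HardInstance.
Variables (R : realType) (d m : nat) (eps : R).
Hypotheses (m_gt0 : (0 < m)%N) (m_le_d : (m <= d)%N).
Hypotheses (eps_ge0 : 0 <= eps) (meps_le1 : m.+1%:R * eps <= 1).

Local Notation v := (simplex_vertex R d m).

Definition atom_weight (k : nat) : R :=
  if (k < m.+1)%N then eps else 1 - m.+1%:R * eps.

Definition atom_sign (j0 : option nat) (k : nat) : R :=
  if (k < m.+1)%N then (if j0 == Some k then 1 else -1) else 0.

Definition atom (j0 : option nat) (k : nat) : vec R d :=
  vscale (atom_sign j0 k) (v k).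

(* [hard_dist None] is the corrupted distribution D' and [hard_dist (Some j)]
   is D_j; atom m.+1 carries the remaining mass at the origin. *)
Definition hard_dist (j0 : option nat) : probability (vec R d) R :=
  discrete_prob m.+2 atom_weight (atom j0).

Definition hard_mean (j : nat) : vec R d := vscale (2 * eps) (v j).

Lemma atom_sign_out j0 : atom_sign j0 m.+1 = 0.
Proof. by rewrite /atom_sign ltnn. Qed.

Lemma sqr_atom_sign j0 (k : 'I_m.+1) : atom_sign j0 k ^+ 2 = 1.
Proof. by rewrite /atom_sign ltn_ord; case: (_ == _); rewrite ?sqrrN expr1n. Qed.

Lemma atom_sign_Some j (k : 'I_m.+1) :
  atom_sign (Some j) k = 2 * ((k : nat) == j)%:R - 1.
Proof.
by rewrite /atom_sign ltn_ord (inj_eq Some_inj) eq_sym; case: (_ == _) => /=; ring.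
Qed.

Lemma atom_sign_Some_neq j k : k != j -> atom_sign (Some j) k = atom_sign None k.
Proof. by move=> k_neq; rewrite /atom_sign (inj_eq Some_inj) eq_sym (negPf k_neq). Qed.

Lemma sum_atom_weight (F : nat -> R) :
  \sum_(k < m.+2) `|atom_weight k| * F k
  = eps * \sum_(k < m.+1) F k + (1 - m.+1%:R * eps) * F m.+1.
Proof.
rewrite big_ord_recr /= /atom_weight ltnn mulr_sumr ger0_norm ?subr_ge0 //.
by congr (_ + _); apply: eq_bigr => k _; rewrite ltn_ord ger0_norm.
Qed.

Lemma sum_abs_atom_weight : \sum_(k < m.+2) `|atom_weight k| = 1.
Proof.
have := sum_atom_weight (fun _ => 1); under eq_bigr do rewrite mulr1.
by move=> ->; rewrite sumr_const card_ord -mulr_natl; lra.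
Qed.

Lemma sum_hard_mean (i : 'I_d) : \sum_(j < m.+1) tnth (hard_mean j) i = 0.
Proof.
under eq_bigr do rewrite tnth_vscale.
by rewrite -mulr_sumr sum_simplex_vertex // mulr0.
Qed.

Lemma dotp_hard_mean j : (j <= m)%N ->
  dotp (hard_mean j) (hard_mean j) = (2 * eps * Num.sqrt (1 - m.+1%:R^-1)) ^+ 2.
Proof.
move=> j_le; rewrite dotpZl dotpZr dotp_simplex_vertex // exprMn sqr_sqrtr; first ring.
by rewrite subr_ge0 invf_le1 ?ler1n ?ltr0n.
Qed.

Lemma sum_atom_coord j (i : 'I_d) : (j < m.+1)%N ->
  \sum_(k < m.+2) `|atom_weight k| * tnth (atom (Some j) k) i = tnth (hard_mean j) i.
Proof.
move=> j_lt; rewrite (sum_atom_weight (fun k => tnth (atom (Some j) k) i)).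
rewrite /atom tnth_vscale atom_sign_out mul0r mulr0 addr0.
rewrite (eq_bigr (fun k : 'I_m.+1 =>
  2 * (tnth (v k) i * ((k : nat) == j)%:R) - tnth (v k) i)); last first.
  by move=> k _; rewrite tnth_vscale atom_sign_Some; ring.
rewrite sumrB -mulr_sumr (sum_mul_delta (fun k => tnth (v k) i)) //.
by rewrite sum_simplex_vertex // subr0 tnth_vscale mulrCA mulrA.
Qed.

Lemma hard_dist_mean j : (j < m.+1)%N -> has_mean (hard_dist (Some j)) (hard_mean j).
Proof.
move=> j_lt i; split.
  exact: integrable_discrete_prob sum_abs_atom_weight _ (measurable_tnth i).
rewrite integral_discrete_prob ?sum_abs_atom_weight ?sum_atom_coord //.
exact: measurable_tnth.
Qed.

Lemma hard_dist_cov j s2 : (j < m.+1)%N -> eps <= s2 ->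
  cov_le (hard_dist (Some j)) (hard_mean j) s2.
Proof.
move=> j_lt eps_le u.
have mf : measurable_fun setT (fun x => dotp u (vsub x (hard_mean j)) ^+ 2).
  by apply: measurable_funX; exact: measurable_dotp_vsub.
rewrite integral_discrete_prob ?sum_abs_atom_weight //.
have mean : dotp u (hard_mean j)
    = \sum_(k < m.+2) `|atom_weight k| * dotp u (atom (Some j) k).
  by rewrite sum_dotpr; apply: eq_bigr => i _; rewrite sum_atom_coord.
under eq_bigr do rewrite dotpBr mean.
rewrite lee_fin; apply: le_trans (weighted_variance_le _ _) _.
  exact: sum_abs_atom_weight.
rewrite (sum_atom_weight (fun k => dotp u (atom (Some j) k) ^+ 2)).
rewrite /atom dotpZr atom_sign_out mul0r expr0n mulr0 addr0.
under eq_bigr do rewrite dotpZr exprMn sqr_atom_sign mul1r.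
apply: le_trans (ler_wpM2l eps_ge0 (sum_sqr_dotp_simplex_vertex_le m_gt0 m_le_d u)) _.
by rewrite ler_wpM2r ?dotp_ge0.
Qed.

Lemma tv_hard_dist j : (j < m.+1)%N -> tv_le (hard_dist (Some j)) (hard_dist None) eps.
Proof.
move=> j_lt A _; rewrite !discrete_probE ?sum_abs_atom_weight // !discrete_measureE /=.
have j_lt2 : (j < m.+2)%N by exact: ltn_trans j_lt _.
rewrite -sumrB (bigD1 (Ordinal j_lt2)) //= big1 ?addr0; last first.
  move=> k; rewrite -val_eqE /= => k_neq_j.
  by rewrite /atom atom_sign_Some_neq ?subrr.
rewrite /atom_weight j_lt (ger0_norm eps_ge0) -mulrBr normrM (ger0_norm eps_ge0).
rewrite -[leRHS]mulr1 ler_wpM2l //.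
by case: (_ \in _); case: (_ \in _);
  rewrite /= ?subrr ?subr0 ?sub0r ?normrN ?normr0 ?normr1.
Qed.

End HardInstance.

Lemma exists_ge_of_sum_ge (R : realDomainType) n (f : 'I_n -> \bar R) (a : R) :
  (0 < n)%N ->
  ((n%:R * a)%:E <= \sum_(j < n) f j)%E -> exists j, (a%:E <= f j)%E.
Proof.
move=> n_gt0 sum_ge.
have [j _ f_le] := arg_maxP f (isT : xpredT (Ordinal n_gt0)).
exists j; rewrite -(@lee_pmul2l _ n%:R%:E) ?lte_fin ?ltr0n // -EFinM.
have -> : (n%:R%:E * f j = \sum_(k < n) f j)%E by rewrite sumr_const card_ord mule_natl.
by apply: le_trans sum_ge _; apply: lee_sum => k _; exact: f_le.
Qed.

Section ExpectedDistance.
Variables (R : realType) (d n : nat) (mu : 'I_n -> vec R d) (r : R).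
Hypotheses (r_ge0 : 0 <= r) (mu_norm : forall j, dotp (mu j) (mu j) = r ^+ 2).
Hypothesis sum_mu : forall i, \sum_(j < n) tnth (mu j) i = 0.

Lemma sum_enorm_sub_ge x : n%:R * r <= \sum_(j < n) enorm (vsub x (mu j)).
Proof.
have [->|r_neq0] := eqVneq r 0.
  by rewrite mulr0; apply: sumr_ge0 => j _; exact: sqrtr_ge0.
have r_gt0 : 0 < r by rewrite lt_def r_neq0.
have enorm_mu j : enorm (mu j) = r by rewrite /enorm mu_norm sqrtr_sqr ger0_norm.
have term j : r ^+ 2 - dotp x (mu j) <= r * enorm (vsub x (mu j)).
  rewrite -(mu_norm j) (dotpC x) -opprB -dotpBr -(enorm_mu j).
  by apply: le_trans (normr_dotp_le _ _); rewrite -normrN ler_norm.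
have sum_dotp : \sum_(j < n) dotp x (mu j) = 0.
  under eq_bigr do rewrite -[dotp _ _]mul1r.
  rewrite (sum_dotpr (fun _ => 1)) big1 // => i _.
  by under eq_bigr do rewrite mul1r; rewrite sum_mu mulr0.
have : \sum_(j < n) (r ^+ 2 - dotp x (mu j)) <= \sum_(j < n) r * enorm (vsub x (mu j)).
  by apply: ler_sum => j _; exact: term.
rewrite sumrB sum_dotp subr0 sumr_const card_ord -mulr_sumr => sum_le.
rewrite -(ler_pM2l r_gt0); apply: le_trans sum_le.
by rewrite -mulr_natr; nra.
Qed.

Lemma exists_integral_enorm_sub_ge (Q : probability (vec R d) R) : (0 < n)%N ->
  exists j, (r%:E <= \int[Q]_x (enorm (vsub x (mu j)))%:E)%E.
Proof.
move=> n_gt0; apply: exists_ge_of_sum_ge => //.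
have mf j : measurable_fun setT (fun x => (enorm (vsub x (mu j)))%:E).
  by apply/measurable_EFinP; exact: measurable_enorm_vsub.
rewrite -ge0_integral_sum //; last by move=> j x _; rewrite lee_fin sqrtr_ge0.
have -> : ((n%:R * r)%:E = \int[Q]_x (cst (n%:R * r)%:E x))%E.
  by rewrite integral_cst // -[LHS]mule1; congr (_ * _)%E; exact/esym/probability_setT.
apply: ge0_le_integral => //.
- by move=> x _; rewrite lee_fin mulr_ge0.
- exact: emeasurable_sum.
- by move=> x _; rewrite sumEFin lee_fin; exact: sum_enorm_sub_ge.
Qed.

End ExpectedDistance.

Lemma exists_maximal_dim (R : realFieldType) (eps : R) d :
  (1 <= d)%N -> 0 <= eps -> eps <= 1 / 2 ->
  exists m, [/\ (0 < m)%N, (m <= d)%N, m.+1%:R * eps <= 1 & m = d \/ 1 < m.+2%:R * eps].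
Proof.
move=> + eps_ge0 eps_le; elim: d => [//|[|d] IH] _.
  by exists 1%N; split => //; [lra | left].
have [le1|gt1] := lerP (d.+3%:R * eps) 1.
  by exists d.+2; split => //; left.
have [m [m_gt0 m_le meps_le m_max]] := IH isT.
exists m; split => //; first exact: leqW.
by right; case: m_max => // ->.
Qed.

Lemma jung_ratio_le (R : realFieldType) d m (eps : R) : 0 <= eps -> eps <= 1 / 2 ->
  m = d \/ 1 < m.+2%:R * eps ->
  d%:R / (d%:R + 1) * (1 - 2 * eps) ^+ 2 <= 1 - m.+1%:R^-1.
Proof.
move=> eps_ge0 eps_le m_max.
have -> : d%:R / (d%:R + 1) = 1 - (d%:R + 1)^-1 :> R.
  by field; rewrite natr1 pnatr_eq0.
have sq_le1 : (1 - 2 * eps) ^+ 2 <= 1 by nra.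
have inv_le1 : d.+1%:R^-1 <= 1 :> R by rewrite invf_le1 ?ltr0n ?ler1n.
rewrite natr1; case: m_max => [->|m_max].
  by rewrite -[leRHS]mulr1 ler_wpM2l ?subr_ge0.
have m1_gt0 : 0 < m.+1%:R :> R by rewrite ltr0n.
have inv_le : m.+1%:R^-1 <= 4 * eps * (1 - eps).
  rewrite -div1r ler_pdivrMr //.
  by move: m_max; rewrite -addn1 natrD; nra.
apply: (@le_trans _ _ ((1 - 2 * eps) ^+ 2)).
  by rewrite ler_piMl ?sqr_ge0 // gerBl.
have -> : (1 - 2 * eps) ^+ 2 = 1 - 4 * eps * (1 - eps) by ring.
by rewrite lerB.
Qed.

Lemma jung_bound (R : realType) d m (eps s2 : R) : 0 <= eps -> eps <= 1 / 2 ->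
  m = d \/ 1 < m.+2%:R * eps -> s2 * eps = eps ^+ 2 ->
  JUNG d * (1 - 2 * eps) * Num.sqrt (2 * s2 * eps)
    <= 2 * eps * Num.sqrt (1 - m.+1%:R^-1).
Proof.
move=> eps_ge0 eps_le m_max s2_eps.
have ratio := jung_ratio_le eps_ge0 eps_le m_max.
have rhs_ge0 : 0 <= 1 - m.+1%:R^-1 :> R.
  by apply: le_trans ratio; rewrite mulr_ge0 ?sqr_ge0 ?mulr_ge0 ?invr_ge0.
rewrite -[2 * s2 * eps]mulrA s2_eps /JUNG.
rewrite -(@ler_pXn2r _ 2) ?nnegrE ?mulr_ge0 ?sqrtr_ge0 ?subr_ge0 //; last lra.
rewrite !exprMn !sqr_sqrtr ?mulr_ge0 ?sqr_ge0 //.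
have -> : 2 * d%:R / (d%:R + 1) * (1 - 2 * eps) ^+ 2 * (2 * eps ^+ 2)
    = (2 * eps) ^+ 2 * (d%:R / (d%:R + 1) * (1 - 2 * eps) ^+ 2) by ring.
by rewrite -exprMn ler_wpM2l ?sqr_ge0.
Qed.

Theorem theorem2 (R : realType) :
  exists c : R,
  forall (d : nat), (1 <= d)%N ->
  forall eps : R, 0 <= eps -> eps <= 1 / 2 ->
  forall A : algorithm R d,
  exists (sigma : R) (D D' : probability (vec R d) R) (mu : vec R d),
    0 < sigma /\
    has_mean D mu /\ cov_le D mu (sigma ^+ 2) /\ tv_le D D' eps /\
    (((JUNG d * (1 - c * eps) * Num.sqrt (2 * sigma ^+ 2 * eps))%:E
       <= alg_error A eps (sigma ^+ 2) D' mu)%E).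
Proof.
exists 2 => d d_ge1 eps eps_ge0 eps_le A.
have [m [m_gt0 m_le_d meps_le1 m_max]] := exists_maximal_dim d_ge1 eps_ge0 eps_le.
have [sigma sigma_gt0 [eps_le_s2 s2_eps]] : exists2 sigma : R,
    0 < sigma & eps <= sigma ^+ 2 /\ sigma ^+ 2 * eps = eps ^+ 2.
  have [->|eps_neq0] := eqVneq eps 0.
    by exists 1; rewrite ?ltr01 ?expr1n ?mulr0 ?expr0n.
  have eps_gt0 : 0 < eps by rewrite lt_def eps_neq0.
  exists (Num.sqrt eps); first by rewrite sqrtr_gt0.
  by rewrite sqr_sqrtr // expr2.
pose r := 2 * eps * Num.sqrt (1 - m.+1%:R^-1).
have r_ge0 : 0 <= r by rewrite !mulr_ge0 ?sqrtr_ge0.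
have [j err_ge] := exists_integral_enorm_sub_ge r_ge0
  (fun j : 'I_m.+1 => dotp_hard_mean eps m_gt0 m_le_d (ltn_ord j))
  (sum_hard_mean eps m_gt0) (A eps (sigma ^+ 2) (hard_dist d m eps None)) (ltn0Sn m).
exists sigma, (hard_dist d m eps (Some (j : nat))), (hard_dist d m eps None).
exists (hard_mean d m eps j).
split; first exact: sigma_gt0.
split; first exact: (hard_dist_mean (d := d) m_gt0 eps_ge0 meps_le1 (ltn_ord j)).
split; first exact: (hard_dist_cov m_gt0 m_le_d eps_ge0 meps_le1 (ltn_ord j) eps_le_s2).
split; first exact: (tv_hard_dist (d := d) eps_ge0 meps_le1 (ltn_ord j)).
apply: le_trans err_ge; rewrite lee_fin.
exact: jung_bound eps_ge0 eps_le m_max s2_eps.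
Qed.
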